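(* Let $S$ be a left fairly amenable semigroup with left fairly invariant finitely-additive probability measure $\mu$, let $s\in S$, and let $f:S\to[0,\infty)$ be bounded. If $s\ast f$ is bounded (with all defining sums convergent), then $\int (s\ast f)\,d\mu=\int f\,d\mu$.
   Context: For a semigroup $S$, $s\in S$, $A\subseteq S$: $sA=\{sa:a\in A\}$; $s$ acts injectively on the left of $A$ if $a\mapsto sa$ is injective on $A$. A finitely-additive probability measure on $S$ is $\mu:\mathcal P(S)\to[0,1]$, $\mu(S)=1$, additive on disjoint sets; it is left fairly invariant if $\mu(sA)=\mu(A)$ whenever $s$ acts injectively on the left of $A$. $S$ is left fairly amenable if such $\mu$ exists. For bounded $f$, $(s\ast f)(x)=\sum_{t\in S,\ st=x}f(t)$. For a finitely-additive measure, the integral of a non-negative simple function $\sum_i a_i\chi_{A_i}$ (finite sum) is $\sum_i a_i\mu(A_i)$, and for a bounded non-negative $f$, $\int f\,d\mu$ is the supremum of integrals of simple functions $h\le f$. *)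

From Stdlib Require Import Reals List Classical ClassicalEpsilon ClassicalDescription.
Import ListNotations.
Open Scope R_scope.

Definition associative {S : Type} (op : S -> S -> S) : Prop :=
  forall a b c, op a (op b c) = op (op a b) c.

Definition lmul_set {S : Type} (op : S -> S -> S) (s : S) (A : S -> Prop) : S -> Prop :=
  fun y => exists a, A a /\ y = op s a.

Definition acts_inj_left {S : Type} (op : S -> S -> S) (s : S) (A : S -> Prop) : Prop :=
  forall a b, A a -> A b -> op s a = op s b -> a = b.

Definition fa_prob_measure {S : Type} (mu : (S -> Prop) -> R) : Prop :=
  (forall A, 0 <= mu A <= 1) /\
  mu (fun _ => True) = 1 /\
  (forall A B, (forall x, A x -> B x -> False) ->
     mu (fun x => A x \/ B x) = mu A + mu B).

Definition left_fairly_invariant {S : Type} (op : S -> S -> S) (mu : (S -> Prop) -> R) : Prop :=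
  forall s A, acts_inj_left op s A -> mu (lmul_set op s A) = mu A.

Definition left_fairly_amenable {S : Type} (op : S -> S -> S) : Prop :=
  exists mu, fa_prob_measure mu /\ left_fairly_invariant op mu.

Definition fbounded {S : Type} (f : S -> R) : Prop :=
  exists M, forall x, Rabs (f x) <= M.

Definition lsum {S : Type} (f : S -> R) (l : list S) : R :=
  fold_right (fun t acc => f t + acc) 0 l.

(* (s * f)(x) = sum_{t : s t = x} f t, as an (unordered) sum of non-negative terms:
   L is the supremum of all finite partial sums over distinct t with s t = x.
   Existence of such an L is exactly convergence of the defining sum. *)
Definition conv_sum_is {S : Type} (op : S -> S -> S) (s : S) (f : S -> R) (x : S) (L : R) : Prop :=
  is_lub (fun r => exists l : list S, NoDup l /\ (forall t, In t l -> op s t = x) /\ r = lsum f l) L.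

(* Simple functions: finite lists of (coefficient, set), meaning sum_i a_i chi_{A_i}. *)
Definition indic {S : Type} (A : S -> Prop) (x : S) : R :=
  if excluded_middle_informative (A x) then 1 else 0.

Definition simple_eval {S : Type} (h : list (R * (S -> Prop))) (x : S) : R :=
  fold_right (fun p acc => fst p * indic (snd p) x + acc) 0 h.

Definition simple_integral {S : Type} (mu : (S -> Prop) -> R) (h : list (R * (S -> Prop))) : R :=
  fold_right (fun p acc => fst p * mu (snd p) + acc) 0 h.

Definition integral_is {S : Type} (mu : (S -> Prop) -> R) (f : S -> R) (I : R) : Prop :=
  is_lub (fun r => exists h : list (R * (S -> Prop)),
            (forall p, In p h -> 0 <= fst p) /\
            (forall x, simple_eval h x <= f x) /\
            r = simple_integral mu h) I.

(* 1. Simple integrals are monotone (hence well defined): a pointwise inequality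
      between simple functions integrates, by splitting along their sets.
   2. Bounded non-negative functions have integrals, and they are approximated
      uniformly from below by simple functions.
   3. Transport: given lists L x of at most N distinct preimages of each x, a
      simple function h is "pushed" to push h with (push h)(x) = sum of h over
      L x.  Split by the position k of t in L (s t), s acts injectively on each
      piece, so by fair invariance push h integrates like h restricted to the
      listed points; also the points with N listed preimages have measure <= 1/N.
   4. ∫ f <= ∫ s*f: a lower sum of f lives (up to eps) on {f >= eps}, where
      every point has fewer than sup(s*f)/eps preimages; push it.
      ∫ s*f <= ∫ f: push a fine lower approximation of f, listing N preimages;
      the error is eps/2 plus sup(s*f) times the measure of the saturated points. *)

From Stdlib Require Import Reals List Lra Lia Classical ClassicalDescription IndefiniteDescription FunctionalExtensionality PropExtensionality.
Import ListNotations.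
Open Scope R_scope.

Section SimpleIntegral.

Context {S : Type}.
Variable mu : (S -> Prop) -> R.
Hypothesis Hmu : fa_prob_measure mu.

Lemma mu_ext (A B : S -> Prop) : (forall x, A x <-> B x) -> mu A = mu B.
Proof.
  intro H. f_equal. apply functional_extensionality. intro x.
  apply propositional_extensionality. apply H.
Qed.

Lemma mu_nonneg (A : S -> Prop) : 0 <= mu A.
Proof. apply (proj1 Hmu). Qed.

Lemma mu_split (C B : S -> Prop) :
  mu C = mu (fun x => C x /\ B x) + mu (fun x => C x /\ ~ B x).
Proof.
  destruct Hmu as [_ [_ Hadd]].
  rewrite <- Hadd by (intros x [_ Hb] [_ Hnb]; tauto).
  apply mu_ext. intro x. destruct (classic (B x)); tauto.
Qed.

(* The empty set is null: it is disjoint from itself. *)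
Lemma mu_empty (C : S -> Prop) : (forall x, ~ C x) -> mu C = 0.
Proof.
  intro HC. destruct Hmu as [_ [_ Hadd]].
  assert (E : mu (fun x => C x \/ C x) = mu C + mu C)
    by (apply Hadd; intros x Cx _; exact (HC x Cx)).
  rewrite (mu_ext _ C) in E by tauto. lra.
Qed.


Definition restrict (C : S -> Prop) : (S -> Prop) -> R :=
  fun A => mu (fun x => A x /\ C x).

Lemma restrict_split (C B A : S -> Prop) :
  restrict C A = restrict (fun x => C x /\ B x) A + restrict (fun x => C x /\ ~ B x) A.
Proof.
  unfold restrict. rewrite (mu_split (fun x => A x /\ C x) B).
  f_equal; apply mu_ext; tauto.
Qed.

Lemma restrict_all : restrict (fun _ => True) = mu.
Proof.
  apply functional_extensionality. intro A. unfold restrict. apply mu_ext. tauto.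
Qed.

End SimpleIntegral.

Lemma indic_in {S : Type} (A : S -> Prop) x : A x -> indic A x = 1.
Proof. intro H. unfold indic. destruct (excluded_middle_informative (A x)); [reflexivity | contradiction]. Qed.

Lemma indic_out {S : Type} (A : S -> Prop) x : ~ A x -> indic A x = 0.
Proof. intro H. unfold indic. destruct (excluded_middle_informative (A x)); [contradiction | reflexivity]. Qed.

Lemma simple_integral_measure_add {S : Type} (nu nu1 nu2 : (S -> Prop) -> R)
  (h : list (R * (S -> Prop))) :
  (forall A, nu A = nu1 A + nu2 A) ->
  simple_integral nu h = simple_integral nu1 h + simple_integral nu2 h.
Proof.
  intro Hnu. induction h as [|[a A] h IH]; simpl; [ring|].
  rewrite IH, Hnu. ring.
Qed.

Lemma simple_eval_app {S : Type} (h1 h2 : list (R * (S -> Prop))) x :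
  simple_eval (h1 ++ h2) x = simple_eval h1 x + simple_eval h2 x.
Proof. induction h1 as [|p h1 IH]; simpl; [ring|]. rewrite IH. ring. Qed.

Lemma simple_integral_app {S : Type} mu (h1 h2 : list (R * (S -> Prop))) :
  simple_integral mu (h1 ++ h2) = simple_integral mu h1 + simple_integral mu h2.
Proof. induction h1 as [|p h1 IH]; simpl; [ring|]. rewrite IH. ring. Qed.

Definition simple_neg {S : Type} (h : list (R * (S -> Prop))) : list (R * (S -> Prop)) :=
  map (fun p => (- fst p, snd p)) h.

Lemma simple_eval_neg {S : Type} (h : list (R * (S -> Prop))) x :
  simple_eval (simple_neg h) x = - simple_eval h x.
Proof. induction h as [|p h IH]; simpl; [ring|]. rewrite IH. ring. Qed.

Lemma simple_integral_neg {S : Type} mu (h : list (R * (S -> Prop))) :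
  simple_integral mu (simple_neg h) = - simple_integral mu h.
Proof. induction h as [|p h IH]; simpl; [ring|]. rewrite IH. ring. Qed.

Section Comparison.

Context {S : Type}.
Variable mu : (S -> Prop) -> R.
Hypothesis Hmu : fa_prob_measure mu.

Lemma restrict_integral_nonneg (h : list (R * (S -> Prop))) :
  forall C c, (forall x, C x -> 0 <= c + simple_eval h x) ->
  0 <= c * mu C + simple_integral (restrict mu C) h.
Proof.
  induction h as [|[a A] h IH]; intros C c H; simpl.
  - destruct (classic (exists x, C x)) as [[x Cx]|NC].
    + specialize (H x Cx). simpl in H. pose proof (mu_nonneg mu Hmu C). nra.
    + rewrite (mu_empty mu Hmu C) by (intros x Cx; eauto). lra.
  - rewrite (mu_split mu Hmu C A).
    rewrite (simple_integral_measure_add _ _ _ h (restrict_split mu Hmu C A)).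
    assert (Hin : 0 <= (c + a) * mu (fun x => C x /\ A x)
                       + simple_integral (restrict mu (fun x => C x /\ A x)) h).
    { apply IH. intros x [Cx Ax]. specialize (H x Cx). simpl in H.
      rewrite indic_in in H by exact Ax. lra. }
    assert (Hout : 0 <= c * mu (fun x => C x /\ ~ A x)
                       + simple_integral (restrict mu (fun x => C x /\ ~ A x)) h).
    { apply IH. intros x [Cx Ax]. specialize (H x Cx). simpl in H.
      rewrite indic_out in H by exact Ax. lra. }
    assert (E : restrict mu C A = mu (fun x => C x /\ A x))
      by (unfold restrict; apply mu_ext; tauto).
    rewrite E. lra.
Qed.

(* Monotonicity of the simple integral (and hence its well-definedness):
   a pointwise inequality up to a constant c integrates, since mu S = 1. *)
Lemma simple_integral_mono (h1 h2 : list (R * (S -> Prop))) (c : R) :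
  (forall x, simple_eval h1 x <= simple_eval h2 x + c) ->
  simple_integral mu h1 <= simple_integral mu h2 + c.
Proof.
  intro H.
  pose proof (restrict_integral_nonneg (h2 ++ simple_neg h1) (fun _ => True) c) as K.
  rewrite restrict_all, simple_integral_app, simple_integral_neg in K by exact Hmu.
  rewrite (proj1 (proj2 Hmu)) in K.
  assert (0 <= c * 1 + (simple_integral mu h2 + - simple_integral mu h1)); [|lra].
  apply K. intros x _. rewrite simple_eval_app, simple_eval_neg. specialize (H x). lra.
Qed.

End Comparison.

Lemma simple_eval_nonneg {S : Type} (h : list (R * (S -> Prop))) x :
  (forall p, In p h -> 0 <= fst p) -> 0 <= simple_eval h x.
Proof.
  induction h as [|[a A] h IH]; simpl; intros H; [lra|].
  assert (0 <= a) by exact (H (a, A) (or_introl eq_refl)).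
  assert (0 <= simple_eval h x) by (apply IH; auto).
  unfold indic; destruct (excluded_middle_informative (A x)); nra.
Qed.

Definition lower_sums {S : Type} (mu : (S -> Prop) -> R) (g : S -> R) : R -> Prop :=
  fun r => exists h : list (R * (S -> Prop)),
    (forall p, In p h -> 0 <= fst p) /\
    (forall x, simple_eval h x <= g x) /\
    r = simple_integral mu h.

Lemma integral_exists {S : Type} (mu : (S -> Prop) -> R) (Hmu : fa_prob_measure mu)
  (g : S -> R) (B : R) :
  (forall x, 0 <= g x) -> (forall x, g x <= B) -> exists I, integral_is mu g I.
Proof.
  intros Hg0 HgB.
  assert (Hbound : bound (lower_sums mu g)).
  { exists B. intros r [h [_ [Hh ->]]].
    pose proof (simple_integral_mono mu Hmu h [] B) as K. simpl in K.
    rewrite Rplus_0_l in K. apply K. intro x. simpl. specialize (Hh x). specialize (HgB x). lra. }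
  assert (Hne : exists r, lower_sums mu g r).
  { exists 0, []. repeat split; simpl; auto; tauto. }
  destruct (completeness _ Hbound Hne) as [I HI]. exists I. exact HI.
Qed.

Lemma integral_le {S : Type} (mu : (S -> Prop) -> R) (g1 : S -> R) (I1 I2 : R) :
  integral_is mu g1 I1 ->
  (forall eps, 0 < eps -> forall h, (forall p, In p h -> 0 <= fst p) ->
     (forall x, simple_eval h x <= g1 x) -> simple_integral mu h <= I2 + eps) ->
  I1 <= I2.
Proof.
  intros [_ Hlub] Hsmall. apply Rle_plus_epsilon. intros eps Heps.
  apply Hlub. intros r [h [Hc [Hh ->]]]. exact (Hsmall eps Heps h Hc Hh).
Qed.

(* Uniform approximation from below by simple functions with non-negative
   coefficients: peel off layers of height eps. *)
Lemma simple_approx_layers {S : Type} (eps : R) (Heps : 0 < eps) (K : nat) :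
  forall g : S -> R, (forall x, 0 <= g x <= INR K * eps) ->
  exists h, (forall p, In p h -> 0 <= fst p) /\
            (forall x, simple_eval h x <= g x) /\
            (forall x, g x <= simple_eval h x + eps).
Proof.
  induction K as [|K IH]; intros g Hg.
  - exists []. simpl. split; [tauto|]. split; intro x; specialize (Hg x); simpl in Hg; lra.
  - set (g' := fun x => if Rle_dec eps (g x) then g x - eps else 0).
    destruct (IH g') as [h' [Hc [Hle Hge]]].
    { intro x. unfold g'. pose proof (pos_INR K). specialize (Hg x). rewrite S_INR in Hg.
      destruct Rle_dec; split; nra. }
    exists ((eps, fun x => eps <= g x) :: h'). split; [|split]; [| intro x; simpl ..].
    + intros p [<-|Hp]; simpl; [lra | auto].
    + specialize (Hle x). unfold g' in Hle. destruct (Rle_dec eps (g x)).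
      * rewrite indic_in by auto. lra.
      * rewrite indic_out by auto. specialize (Hg x). lra.
    + specialize (Hge x). unfold g' in Hge. destruct (Rle_dec eps (g x)).
      * rewrite indic_in by auto. lra.
      * rewrite indic_out by auto. pose proof (simple_eval_nonneg h' x Hc). lra.
Qed.

Lemma large_nat (a eps : R) : 0 < eps -> exists N : nat, 0 < INR N /\ a <= INR N * eps.
Proof.
  intro Heps. destruct (INR_unbounded (Rmax 1 (a / eps))) as [N HN].
  pose proof (Rmax_l 1 (a / eps)). pose proof (Rmax_r 1 (a / eps)).
  exists N. split; [lra|].
  replace a with (a / eps * eps) by (field; lra). apply Rmult_le_compat_r; lra.
Qed.

Lemma simple_approx {S : Type} (g : S -> R) (M eps : R) :
  0 < eps -> (forall x, 0 <= g x <= M) ->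
  exists h, (forall p, In p h -> 0 <= fst p) /\
            (forall x, simple_eval h x <= g x) /\
            (forall x, g x <= simple_eval h x + eps).
Proof.
  intros Heps Hg. destruct (large_nat M eps Heps) as [K [_ HK]].
  apply (simple_approx_layers eps Heps K). intro x. specialize (Hg x). lra.
Qed.

Fixpoint sum_below (n : nat) (F : nat -> R) : R :=
  match n with O => 0 | S n' => F O + sum_below n' (fun k => F (S k)) end.

Fixpoint concat_below {X : Type} (n : nat) (G : nat -> list X) : list X :=
  match n with O => [] | S n' => G O ++ concat_below n' (fun k => G (S k)) end.

Lemma sum_below_ext (n : nat) :
  forall F G, (forall k, (k < n)%nat -> F k = G k) -> sum_below n F = sum_below n G.
Proof.
  induction n as [|n IH]; intros F G H; simpl; auto.
  rewrite (H 0%nat) by lia. f_equal. apply IH. intros k Hk. apply H. lia.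
Qed.

Lemma sum_below_zero (n : nat) : forall F, (forall k, F k = 0) -> sum_below n F = 0.
Proof. induction n as [|n IH]; intros F H; simpl; auto. rewrite H, IH; auto. ring. Qed.

Lemma sum_below_mult_r (n : nat) : forall F c,
  sum_below n (fun k => F k * c) = sum_below n F * c.
Proof. induction n as [|n IH]; intros F c; simpl; [ring|]. rewrite IH. ring. Qed.

Lemma simple_eval_concat {T : Type} (n : nat) :
  forall (G : nat -> list (R * (T -> Prop))) x,
  simple_eval (concat_below n G) x = sum_below n (fun k => simple_eval (G k) x).
Proof. induction n as [|n IH]; intros; simpl; auto. rewrite simple_eval_app, IH. reflexivity. Qed.

Lemma simple_integral_concat {T : Type} mu (n : nat) :
  forall (G : nat -> list (R * (T -> Prop))),
  simple_integral mu (concat_below n G) = sum_below n (fun k => simple_integral mu (G k)).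
Proof. induction n as [|n IH]; intros; simpl; auto. rewrite simple_integral_app, IH. reflexivity. Qed.

Lemma concat_nonneg_coefs {T : Type} (n : nat) :
  forall (G : nat -> list (R * (T -> Prop))),
  (forall k p, In p (G k) -> 0 <= fst p) -> forall p, In p (concat_below n G) -> 0 <= fst p.
Proof.
  induction n as [|n IH]; intros G H p Hp; simpl in Hp; [tauto|].
  apply in_app_iff in Hp. destruct Hp as [Hp|Hp]; [exact (H 0%nat p Hp)|].
  exact (IH (fun k => G (S k)) (fun k => H (S k)) p Hp).
Qed.

Lemma sum_below_nth {T : Type} (G : T -> R) (l : list T) : forall n, (length l <= n)%nat ->
  sum_below n (fun k => match nth_error l k with Some t => G t | None => 0 end) = lsum G l.
Proof.
  induction l as [|a l IH]; intros n Hn.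
  - apply sum_below_zero. intros [|k]; reflexivity.
  - destruct n as [|n]; simpl in Hn; [lia|]. simpl. f_equal. apply IH. lia.
Qed.

Lemma sum_below_positions {T : Type} (t : T) (l : list T) : NoDup l -> forall n, (length l <= n)%nat ->
  sum_below n (fun k => indic (fun u => nth_error l k = Some u) t) = indic (fun u => In u l) t.
Proof.
  induction l as [|a l IH]; intros Hnd n Hn.
  - rewrite indic_out by (simpl; tauto). apply sum_below_zero.
    intro k. apply indic_out. destruct k; discriminate.
  - destruct n as [|n]; simpl in Hn; [lia|]. inversion Hnd as [|? ? Ha Hnd']; subst.
    cbn [sum_below]. change (fun k => indic (fun u => nth_error (a :: l) (S k) = Some u) t)
      with (fun k => indic (fun u => nth_error l k = Some u) t).
    rewrite (IH Hnd' n) by lia.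
    destruct (classic (a = t)) as [<-|Hat].
    + rewrite indic_in by reflexivity. rewrite (indic_out (fun u => In u l)) by exact Ha.
      rewrite indic_in by (left; reflexivity). ring.
    + rewrite indic_out by (simpl; intro E; inversion E; contradiction).
      destruct (classic (In t l)) as [Ht|Ht].
      * rewrite !indic_in by (simpl; auto). ring.
      * rewrite !indic_out by (simpl; tauto). ring.
Qed.

Lemma map_sets_nonneg_coefs {T : Type} (F : (T -> Prop) -> (T -> Prop)) (h : list (R * (T -> Prop))) :
  (forall p, In p h -> 0 <= fst p) ->
  forall p, In p (map (fun p => (fst p, F (snd p))) h) -> 0 <= fst p.
Proof. intros H p Hp. apply in_map_iff in Hp. destruct Hp as [q [<- Hq]]. exact (H q Hq). Qed.

Definition restrict_fun {T : Type} (D : T -> Prop) (h : list (R * (T -> Prop))) :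
  list (R * (T -> Prop)) :=
  map (fun p => (fst p, fun t => snd p t /\ D t)) h.

Lemma simple_eval_restrict_fun {T : Type} (D : T -> Prop) h t :
  simple_eval (restrict_fun D h) t = indic D t * simple_eval h t.
Proof.
  induction h as [|[a A] h IH]; simpl; [ring|]. rewrite IH.
  assert (E : indic (fun u => A u /\ D u) t = indic A t * indic D t).
  { unfold indic.
    destruct (excluded_middle_informative (A t /\ D t)),
             (excluded_middle_informative (A t)),
             (excluded_middle_informative (D t)); first [ring | tauto]. }
  rewrite E. ring.
Qed.

Lemma lsum_nonneg {T : Type} (g : T -> R) (l : list T) : (forall t, 0 <= g t) -> 0 <= lsum g l.
Proof. intro H. induction l as [|a l IH]; simpl; [lra|]. pose proof (H a). lra. Qed.

Lemma lsum_mono {T : Type} (g1 g2 : T -> R) (l : list T) :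
  (forall t, In t l -> g1 t <= g2 t) -> lsum g1 l <= lsum g2 l.
Proof.
  induction l as [|a l IH]; simpl; intro H; [lra|].
  pose proof (H a (or_introl eq_refl)). assert (lsum g1 l <= lsum g2 l) by (apply IH; auto). lra.
Qed.

Lemma lsum_lower_bound {T : Type} (g : T -> R) (c : R) (l : list T) :
  (forall t, In t l -> c <= g t) -> INR (length l) * c <= lsum g l.
Proof.
  induction l as [|a l IH]; intro H; [simpl; lra|].
  cbn [length lsum fold_right]. rewrite S_INR. fold (lsum g l).
  pose proof (H a (or_introl eq_refl)).
  assert (INR (length l) * c <= lsum g l) by (apply IH; intros t Ht; apply H; right; exact Ht).
  lra.
Qed.

Lemma lsum_le_plus {T : Type} (g1 g2 : T -> R) (c : R) (l : list T) :
  (forall t, g1 t <= g2 t + c) -> lsum g1 l <= lsum g2 l + INR (length l) * c.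
Proof.
  intro H. induction l as [|a l IH]; [simpl; lra|].
  cbn [length lsum fold_right]. rewrite S_INR. fold (lsum g1 l) (lsum g2 l).
  pose proof (H a). lra.
Qed.

Lemma lsum_app {T : Type} (g : T -> R) (l1 l2 : list T) :
  lsum g (l1 ++ l2) = lsum g l1 + lsum g l2.
Proof.
  induction l1 as [|a l1 IH]; [simpl; ring|].
  change (g a + lsum g (l1 ++ l2) = g a + lsum g l1 + lsum g l2). rewrite IH. ring.
Qed.

Lemma lsum_incl {T : Type} (g : T -> R) (Hg : forall t, 0 <= g t) :
  forall l l', NoDup l -> (forall t, In t l -> In t l') -> lsum g l <= lsum g l'.
Proof.
  induction l as [|a l IH]; intros l' Hnd Hsub.
  - apply lsum_nonneg, Hg.
  - destruct (in_split a l' (Hsub a (or_introl eq_refl))) as [l1 [l2 ->]].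
    inversion Hnd as [|? ? Ha Hnd']; subst.
    assert (K : lsum g l <= lsum g (l1 ++ l2)).
    { apply IH; [exact Hnd'|]. intros t Ht.
      assert (Hin : In t (l1 ++ a :: l2)) by (apply Hsub; right; exact Ht).
      apply in_app_iff in Hin. apply in_app_iff.
      destruct Hin as [Hin|[<-|Hin]]; [left; exact Hin | contradiction | right; exact Hin]. }
    rewrite lsum_app in K |- *.
    change (lsum g (a :: l)) with (g a + lsum g l).
    change (lsum g (a :: l2)) with (g a + lsum g l2). lra.
Qed.

Section Transport.

Context {S : Type} (op : S -> S -> S) (s : S).

Definition preimage_enum (Q : S -> Prop) (N : nat) (x : S) (l : list S) : Prop :=
  NoDup l /\ (forall t, In t l -> op s t = x /\ Q t) /\
  (length l = N \/ ((length l < N)%nat /\ forall t, op s t = x -> Q t -> In t l)).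

Lemma preimage_enum_exists_at (Q : S -> Prop) (x : S) (N : nat) :
  exists l, preimage_enum Q N x l.
Proof.
  induction N as [|N [l [Hnd [Hin Hl]]]].
  - exists []. split; [constructor|]. split; [simpl; tauto|]. left; reflexivity.
  - destruct Hl as [Hlen|[Hlt Hall]].
    + destruct (classic (exists t, op s t = x /\ Q t /\ ~ In t l)) as [[t [Et [Qt Nt]]]|Hno].
      * exists (t :: l). split; [constructor; auto|]. split.
        -- intros u [<-|Hu]; auto.
        -- left. simpl. lia.
      * exists l. split; [auto|]. split; [auto|]. right. split; [lia|].
        intros t Et Qt. apply NNPP. intro Nt. apply Hno. eauto.
    + exists l. split; [auto|]. split; [auto|]. right. split; [lia|auto].
Qed.

Lemma preimage_enum_exists (Q : S -> Prop) (N : nat) :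
  exists L : S -> list S, forall x, preimage_enum Q N x (L x).
Proof. apply functional_choice. intro x. apply preimage_enum_exists_at. Qed.

Definition lmul_fun (h : list (R * (S -> Prop))) : list (R * (S -> Prop)) :=
  map (fun p => (fst p, lmul_set op s (snd p))) h.

Lemma simple_integral_lmul (mu : (S -> Prop) -> R) (Hinv : left_fairly_invariant op mu)
  (h : list (R * (S -> Prop))) :
  (forall p, In p h -> acts_inj_left op s (snd p)) ->
  simple_integral mu (lmul_fun h) = simple_integral mu h.
Proof.
  induction h as [|[a A] h IH]; intro Hinj; simpl; [reflexivity|].
  rewrite IH by (intros p Hp; apply Hinj; right; exact Hp).
  rewrite Hinv by exact (Hinj (a, A) (or_introl eq_refl)). reflexivity.
Qed.

Variable L : S -> list S.
Variable N : nat.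
Hypothesis HLpre : forall x t, In t (L x) -> op s t = x.
Hypothesis HLnodup : forall x, NoDup (L x).
Hypothesis HLlen : forall x, (length (L x) <= N)%nat.

Definition position_set (k : nat) : S -> Prop :=
  fun t => nth_error (L (op s t)) k = Some t.

Lemma position_set_inj (k : nat) (A : S -> Prop) :
  acts_inj_left op s (fun t => A t /\ position_set k t).
Proof.
  intros u v [_ Hu] [_ Hv] E. unfold position_set in Hu, Hv.
  rewrite E, Hv in Hu. injection Hu. auto.
Qed.

Lemma lmul_position_iff (k : nat) (A : S -> Prop) (x : S) :
  lmul_set op s (fun t => A t /\ position_set k t) x <->
  exists t, nth_error (L x) k = Some t /\ A t.
Proof.
  split.
  - intros [t [[At Ht] ->]]. exists t. split; assumption.
  - intros [t [Ht At]].
    assert (Et : op s t = x) by (apply HLpre; eapply nth_error_In; eauto).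
    exists t. split; [split; [exact At|]|congruence].
    unfold position_set. rewrite Et. exact Ht.
Qed.

(* The push-forward of h: (push h)(x) = sum of h over the listed preimages of x. *)
Definition push (h : list (R * (S -> Prop))) : list (R * (S -> Prop)) :=
  concat_below N (fun k => lmul_fun (restrict_fun (position_set k) h)).

Lemma push_nonneg_coefs (h : list (R * (S -> Prop))) :
  (forall p, In p h -> 0 <= fst p) -> forall p, In p (push h) -> 0 <= fst p.
Proof.
  intro Hc. apply concat_nonneg_coefs. intro k.
  apply (map_sets_nonneg_coefs (lmul_set op s)).
  apply (map_sets_nonneg_coefs (fun A t => A t /\ position_set k t)), Hc.
Qed.

Lemma simple_eval_push_piece (k : nat) (h : list (R * (S -> Prop))) (x : S) :
  simple_eval (lmul_fun (restrict_fun (position_set k) h)) x =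
  match nth_error (L x) k with Some t => simple_eval h t | None => 0 end.
Proof.
  induction h as [|[a A] h IH]; simpl; [destruct (nth_error (L x) k); reflexivity|].
  rewrite IH. destruct (nth_error (L x) k) as [t|] eqn:Ek.
  - f_equal. f_equal. destruct (classic (A t)) as [At|At].
    + rewrite !indic_in; [reflexivity | exact At | apply lmul_position_iff; eauto].
    + rewrite !indic_out; [reflexivity | exact At |].
      rewrite lmul_position_iff. intros [u [Eu Au]]. congruence.
  - rewrite indic_out; [ring|]. rewrite lmul_position_iff. intros [u [Eu _]]. congruence.
Qed.

Lemma simple_eval_push (h : list (R * (S -> Prop))) (x : S) :
  simple_eval (push h) x = lsum (simple_eval h) (L x).
Proof.
  unfold push. rewrite simple_eval_concat, <- (sum_below_nth _ (L x) N (HLlen x)).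
  apply sum_below_ext. intros k _. apply simple_eval_push_piece.
Qed.

(* By fair invariance, push h integrates like h restricted to the points
   that are listed among the preimages of their image. *)
Lemma simple_integral_push (mu : (S -> Prop) -> R) (Hinv : left_fairly_invariant op mu)
  (h : list (R * (S -> Prop))) :
  simple_integral mu (push h) =
  simple_integral mu (concat_below N (fun k => restrict_fun (position_set k) h)).
Proof.
  unfold push. rewrite !simple_integral_concat. apply sum_below_ext. intros k _.
  apply simple_integral_lmul; [exact Hinv|].
  intros p Hp. apply in_map_iff in Hp. destruct Hp as [q [<- _]]. apply position_set_inj.
Qed.

Lemma simple_eval_listed (h : list (R * (S -> Prop))) (t : S) :
  simple_eval (concat_below N (fun k => restrict_fun (position_set k) h)) t =
  indic (fun u => In u (L (op s u))) t * simple_eval h t.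
Proof.
  rewrite simple_eval_concat.
  rewrite (sum_below_ext _ _ (fun k => indic (position_set k) t * simple_eval h t))
    by (intros k _; apply simple_eval_restrict_fun).
  rewrite sum_below_mult_r. f_equal.
  exact (sum_below_positions t (L (op s t)) (HLnodup _) N (HLlen _)).
Qed.

Section Integral.

Variable mu : (S -> Prop) -> R.
Hypothesis Hmu : fa_prob_measure mu.
Hypothesis Hinv : left_fairly_invariant op mu.

Lemma push_integral_le (h : list (R * (S -> Prop))) :
  (forall p, In p h -> 0 <= fst p) -> simple_integral mu (push h) <= simple_integral mu h.
Proof.
  intro Hc. rewrite (simple_integral_push mu Hinv).
  pose proof (simple_integral_mono mu Hmu
    (concat_below N (fun k => restrict_fun (position_set k) h)) h 0) as K.
  rewrite Rplus_0_r in K. apply K. intro t. rewrite simple_eval_listed, Rplus_0_r.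
  pose proof (simple_eval_nonneg h t Hc).
  unfold indic; destruct (excluded_middle_informative _); lra.
Qed.

Lemma push_integral_ge (h : list (R * (S -> Prop))) :
  (forall t, ~ In t (L (op s t)) -> simple_eval h t = 0) ->
  simple_integral mu h <= simple_integral mu (push h).
Proof.
  intro Hvan. rewrite (simple_integral_push mu Hinv).
  pose proof (simple_integral_mono mu Hmu h
    (concat_below N (fun k => restrict_fun (position_set k) h)) 0) as K.
  rewrite Rplus_0_r in K. apply K. intro t. rewrite simple_eval_listed, Rplus_0_r.
  destruct (classic (In t (L (op s t)))) as [Ht|Ht].
  - rewrite indic_in by exact Ht. lra.
  - rewrite (Hvan t Ht). lra.
Qed.

(* At most a 1/N fraction of the points have N listed preimages: pushing the
   indicator of their preimage set yields N times their indicator. *)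
Lemma saturated_measure_bound :
  INR N * mu (fun x => length (L x) = N) <= 1.
Proof.
  set (X := fun x => length (L x) = N).
  set (h1 := [(1, fun t => X (op s t))]).
  assert (Hc : forall p, In p h1 -> 0 <= fst p) by (intros p [<-|[]]; simpl; lra).
  assert (K := simple_integral_mono mu Hmu [(INR N, X)] (push h1) 0).
  rewrite Rplus_0_r in K.
  assert (Hpush : simple_integral mu [(INR N, X)] <= simple_integral mu (push h1)).
  { apply K. intro x. rewrite simple_eval_push, Rplus_0_r. simpl.
    destruct (classic (X x)) as [Xx|Xx].
    - rewrite indic_in by exact Xx. rewrite Rmult_1_r, Rplus_0_r, <- Xx, <- (Rmult_1_r (INR _)).
      apply lsum_lower_bound. intros t Ht. simpl.
      rewrite indic_in by (rewrite (HLpre x t Ht); exact Xx). lra.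
    - rewrite indic_out by exact Xx. rewrite Rmult_0_r, Rplus_0_r.
      apply lsum_nonneg. intro t. apply simple_eval_nonneg, Hc. }
  pose proof (push_integral_le h1 Hc).
  pose proof (proj1 Hmu (fun t => X (op s t))).
  simpl in Hpush, H. lra.
Qed.

End Integral.

End Transport.

Section Convolution.

Context {S : Type} (op : S -> S -> S) (s : S).
Variable mu : (S -> Prop) -> R.
Hypothesis Hmu : fa_prob_measure mu.
Hypothesis Hinv : left_fairly_invariant op mu.
Variable f : S -> R.
Hypothesis Hf0 : forall x, 0 <= f x.
Variable sf : S -> R.
Hypothesis Hsf : forall x, conv_sum_is op s f x (sf x).

Lemma partial_sum_le_conv (x : S) (l : list S) :
  NoDup l -> (forall t, In t l -> op s t = x) -> lsum f l <= sf x.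
Proof. intros Hnd Hpre. apply (proj1 (Hsf x)). exists l. auto. Qed.

Lemma conv_le_complete_sum (x : S) (l : list S) :
  (forall t, op s t = x -> In t l) -> sf x <= lsum f l.
Proof.
  intro Hall. apply (proj2 (Hsf x)). intros r [l' [Hnd [Hpre ->]]].
  apply lsum_incl; [exact Hf0 | exact Hnd |]. intros t Ht. apply Hall, Hpre, Ht.
Qed.

Lemma conv_nonneg (x : S) : 0 <= sf x.
Proof. apply (partial_sum_le_conv x []); [constructor | simpl; tauto]. Qed.

(* Since s*f <= Msf < N eps, a point has fewer than N preimages in {f >= eps},
   so an enumeration of at most N of them lists them all. *)
Lemma enum_above_complete (Msf eps : R) (N : nat) (L : S -> list S) :
  (forall x, sf x <= Msf) -> Msf < INR N * eps ->
  (forall x, preimage_enum op s (fun t => eps <= f t) N x (L x)) ->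
  forall x, (length (L x) < N)%nat /\ forall t, op s t = x -> eps <= f t -> In t (L x).
Proof.
  intros HMsf HNeps HL x. destruct (HL x) as [Hnd [Hin [Hlen|Hall]]]; [exfalso|exact Hall].
  assert (Hlow : INR (length (L x)) * eps <= lsum f (L x))
    by (apply lsum_lower_bound; intros t Ht; apply (Hin t Ht)).
  assert (Hup : lsum f (L x) <= sf x)
    by (apply partial_sum_le_conv; [exact Hnd | intros t Ht; apply (Hin t Ht)]).
  rewrite Hlen in Hlow. specialize (HMsf x). lra.
Qed.

(* ∫ f <= ∫ s*f: a lower sum h of f is, up to eps, carried by {f >= eps}; a
   point x has fewer than M/eps preimages there, so pushing h along s gives a
   lower sum of s*f with the same integral. *)
Lemma lower_sum_f_le (Msf Isf : R) :
  (forall x, sf x <= Msf) -> integral_is mu sf Isf ->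
  forall eps, 0 < eps -> forall h, (forall p, In p h -> 0 <= fst p) ->
  (forall x, simple_eval h x <= f x) -> simple_integral mu h <= Isf + eps.
Proof.
  intros HMsf [Hub _] eps Heps h Hc Hhf.
  destruct (large_nat (Msf + eps) eps Heps) as [N [_ HN]].
  set (Q := fun t => eps <= f t).
  destruct (preimage_enum_exists op s Q N) as [L HL].
  pose proof (enum_above_complete Msf eps N L HMsf ltac:(lra) HL) as Hcomplete.
  assert (HLpre : forall x t, In t (L x) -> op s t = x) by (intros x t Ht; apply (HL x), Ht).
  assert (HLnodup : forall x, NoDup (L x)) by (intro x; apply (HL x)).
  assert (HLlen : forall x, (length (L x) <= N)%nat) by (intro x; pose proof (proj1 (Hcomplete x)); lia).
  set (h' := restrict_fun Q h).
  assert (Hh'f : forall t, simple_eval h' t <= f t).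
  { intro t. unfold h'. rewrite simple_eval_restrict_fun.
    pose proof (simple_eval_nonneg h t Hc). specialize (Hhf t). specialize (Hf0 t).
    unfold indic. destruct (excluded_middle_informative _); lra. }
  assert (Hhh' : forall t, simple_eval h t <= simple_eval h' t + eps).
  { intro t. unfold h'. rewrite simple_eval_restrict_fun. specialize (Hhf t).
    destruct (classic (Q t)) as [Qt|Qt].
    - rewrite indic_in by exact Qt. lra.
    - rewrite indic_out by exact Qt. unfold Q in Qt. lra. }
  assert (Hvanish : forall t, ~ In t (L (op s t)) -> simple_eval h' t = 0).
  { intros t Ht. unfold h'. rewrite simple_eval_restrict_fun, indic_out; [ring|].
    intro Qt. apply Ht. apply (proj2 (Hcomplete _)); auto. }
  assert (Hpush_lower : simple_integral mu (push op s L N h') <= Isf).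
  { apply Hub. exists (push op s L N h'). split; [|split; [|reflexivity]].
    - apply push_nonneg_coefs. apply (map_sets_nonneg_coefs (fun A t => A t /\ Q t)), Hc.
    - intro x. rewrite (simple_eval_push op s L N HLpre HLlen).
      apply Rle_trans with (lsum f (L x)); [apply lsum_mono; auto|].
      apply partial_sum_le_conv; [apply HLnodup | apply HLpre]. }
  pose proof (simple_integral_mono mu Hmu h h' eps Hhh').
  pose proof (push_integral_ge op s L N HLnodup HLlen mu Hmu Hinv h' Hvanish).
  lra.
Qed.

Lemma conv_le_listed_approx (N : nat) (L : S -> list S) (hf : list (R * (S -> Prop))) (eps : R) (x : S) :
  preimage_enum op s (fun _ => True) N x (L x) -> length (L x) <> N ->
  (forall t, f t <= simple_eval hf t + eps) -> 0 <= eps ->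
  sf x <= lsum (simple_eval hf) (L x) + INR N * eps.
Proof.
  intros [_ [_ [Hlen|[Hlt Hall]]]] Hnot Happrox Heps; [contradiction|].
  assert (Hsf_sum : sf x <= lsum f (L x)) by (apply conv_le_complete_sum; auto).
  pose proof (lsum_le_plus f (simple_eval hf) eps (L x) Happrox).
  assert (INR (length (L x)) * eps <= INR N * eps)
    by (apply Rmult_le_compat_r; [lra | apply le_INR; lia]).
  lra.
Qed.

(* ∫ s*f <= ∫ f: list up to N preimages of each point and push a fine lower
   approximation of f.  Where all preimages are listed the push is within eps/2
   of s*f; the remaining points have measure at most 1/N by fair invariance. *)
Lemma lower_sum_conv_le (Mf Msf If : R) :
  (forall x, f x <= Mf) -> (forall x, sf x <= Msf) -> integral_is mu f If ->
  forall eps, 0 < eps -> forall h, (forall p, In p h -> 0 <= fst p) ->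
  (forall x, simple_eval h x <= sf x) -> simple_integral mu h <= If + eps.
Proof.
  intros HMf HMsf [Hub _] eps Heps h Hc Hhsf.
  destruct (large_nat Msf (eps / 2) ltac:(lra)) as [N [HNpos HNeps]].
  destruct (preimage_enum_exists op s (fun _ => True) N) as [L HL].
  assert (HLpre : forall x t, In t (L x) -> op s t = x) by (intros x t Ht; apply (HL x), Ht).
  assert (HLnodup : forall x, NoDup (L x)) by (intro x; apply (HL x)).
  assert (HLlen : forall x, (length (L x) <= N)%nat)
    by (intro x; destruct (HL x) as [_ [_ [E|[E _]]]]; lia).
  set (X := fun x => length (L x) = N).
  set (eps' := eps / 2 / INR N).
  assert (Heps' : 0 < eps') by (unfold eps'; apply Rdiv_lt_0_compat; lra).
  destruct (simple_approx f Mf eps' Heps') as [hf [Hfc [Hfle Hfge]]].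
  { intro x. split; [apply Hf0 | apply HMf]. }
  assert (Hpointwise : forall x, simple_eval h x <=
            simple_eval (push op s L N hf ++ [(Msf, X)]) x + eps / 2).
  { intro x. rewrite simple_eval_app, (simple_eval_push op s L N HLpre HLlen). simpl.
    assert (Hpush0 : 0 <= lsum (simple_eval hf) (L x))
      by (apply lsum_nonneg; intro t; apply simple_eval_nonneg, Hfc).
    specialize (Hhsf x). specialize (HMsf x).
    destruct (classic (X x)) as [Xx|Xx].
    - rewrite indic_in by exact Xx. lra.
    - rewrite indic_out by exact Xx.
      pose proof (conv_le_listed_approx N L hf eps' x (HL x) Xx Hfge ltac:(lra)).
      assert (INR N * eps' = eps / 2) by (unfold eps'; field; lra).
      lra. }
  pose proof (simple_integral_mono mu Hmu _ _ _ Hpointwise) as Hint.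
  rewrite simple_integral_app in Hint. simpl in Hint.
  pose proof (push_integral_le op s L N HLnodup HLlen mu Hmu Hinv hf Hfc).
  assert (Hhf : simple_integral mu hf <= If) by (apply Hub; exists hf; auto).
  pose proof (saturated_measure_bound op s L N HLpre HLnodup HLlen mu Hmu Hinv) as Hsat.
  fold X in Hsat. pose proof (mu_nonneg mu Hmu X).
  assert (Msf * mu X <= eps / 2).
  { apply Rle_trans with (INR N * (eps / 2) * mu X); [apply Rmult_le_compat_r; lra | nra]. }
  lra.
Qed.

End Convolution.

Theorem mainTheorem2 (S : Type) (op : S -> S -> S) (Hassoc : associative op)
  (mu : (S -> Prop) -> R) (Hmu : fa_prob_measure mu) (Hinv : left_fairly_invariant op mu)
  (s : S) (f : S -> R) (Hf0 : forall x, 0 <= f x) (Hfb : fbounded f)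
  (sf : S -> R) (Hsf : forall x, conv_sum_is op s f x (sf x)) (Hsfb : fbounded sf) :
  exists I, integral_is mu sf I /\ integral_is mu f I.
Proof.
  destruct Hfb as [Mf HMf]. destruct Hsfb as [Msf HMsf].
  assert (Hfle : forall x, f x <= Mf)
    by (intro x; pose proof (Rle_abs (f x)); specialize (HMf x); lra).
  assert (Hsfle : forall x, sf x <= Msf)
    by (intro x; pose proof (Rle_abs (sf x)); specialize (HMsf x); lra).
  pose proof (conv_nonneg op s f sf Hsf) as Hsf0.
  destruct (integral_exists mu Hmu f Mf Hf0 Hfle) as [If HIf].
  destruct (integral_exists mu Hmu sf Msf Hsf0 Hsfle) as [Isf HIsf].
  assert (Hle : If <= Isf)
    by exact (integral_le mu f If Isf HIf
                (lower_sum_f_le op s mu Hmu Hinv f Hf0 sf Hsf Msf Isf Hsfle HIsf)).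
  assert (Hge : Isf <= If)
    by exact (integral_le mu sf Isf If HIsf
                (lower_sum_conv_le op s mu Hmu Hinv f Hf0 sf Hsf Mf Msf If Hfle Hsfle HIf)).
  exists If. split; [replace If with Isf by lra|]; assumption.
Qed.
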